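(* Let $\Sigma^*$ be an $n\times n$ positive definite matrix with $\Omega^*=(\Sigma^* )^{-1}$ whose conditional independence structure is a tree $T^*$, and suppose that for every leaf $a$ of $T^*$ with neighbor $b$ we have $\Omega^*_{aa}>|\Omega^*_{ab}|$. Let $D^*$ be a diagonal matrix with nonnegative entries and $\Sigma^o=\Sigma^*+D^*$. Let $\Sigma^o=\Sigma'+D'$ where $\Sigma'$ is positive definite with conditional independence structure a tree $T'$, $D'$ is diagonal with nonnegative entries, and $\Omega'=(\Sigma')^{-1}$ satisfies $\Omega'_{aa}>|\Omega'_{ab}|$ for every leaf $a$ of $T'$ with neighbor $b$ in $T'$. Then $T'=T^*$.
   Context: For an $n\times n$ positive definite matrix $\Sigma$ with inverse $\Omega$, its conditional independence structure is the graph on $\{1,\dots,n\}$ with an edge $\{i,j\}$ ($i\neq j$) iff $\Omega_{ij}\neq 0$. *)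

From mathcomp Require Import all_boot all_order all_algebra.
Set Implicit Arguments. Unset Strict Implicit. Unset Printing Implicit Defensive.
Import Order.TTheory GRing.Theory Num.Theory.
Local Open Scope ring_scope.

Definition posdef (R : realFieldType) (n : nat) (S : 'M[R]_n) : Prop :=
  S^T = S /\ forall x : 'cV[R]_n, x != 0 -> 0 < (x^T *m S *m x) ord0 ord0.

Definition ci_graph (R : realFieldType) (n : nat) (S : 'M[R]_n) : rel 'I_n :=
  fun i j => (i != j) && (invmx S i j != 0).

Definition is_connected (T : finType) (e : rel T) : Prop :=
  forall x y : T, connect e x y.
Definition is_acyclic (T : finType) (e : rel T) : Prop :=
  ~ exists s : seq T, [&& (2 < size s)%N, uniq s & cycle e s].
Definition is_tree (T : finType) (e : rel T) : Prop :=
  is_connected e /\ is_acyclic e.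

Definition is_leaf (T : finType) (e : rel T) (a : T) : Prop :=
  #|[set b | e a b]| = 1%N.

Definition leaf_condition (R : realFieldType) (n : nat) (S : 'M[R]_n) : Prop :=
  forall a b : 'I_n, is_leaf (ci_graph S) a -> ci_graph S a b ->
    `|invmx S a b| < invmx S a a.

Definition nonneg_diag (R : realFieldType) (n : nat) (D : 'M[R]_n) : Prop :=
  is_diag_mx D /\ forall i : 'I_n, 0 <= D i i.

(* Let S be positive definite whose graph G (the support of S^-1) is a tree.
   When k separates i from j in G, the global Markov property gives
   S_ij S_kk = S_ik S_kj.  Otherwise let m be the neighbour of k towards i
   and j: then S_ik S_kj S_mm^2 = S_km^2 S_im S_mj, and S_km^2 < S_kk S_mm
   yields, by induction, |S_ik S_kj| < S_kk |S_ij|.  As no entry of S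
   vanishes, the ratio |S_ik S_kj / S_ij| over pairs i, j distinct from k is
   maximal, with value S_kk, exactly on the pairs separated by k, provided k
   is not a leaf.  For a leaf k with neighbour b the maximal ratio at k is
   S_kb^2 / S_bb; the leaf condition gives |S_kb| < S_bb, so the maximal
   ratios at k and b multiply to S_kb^2 with the one at k smaller, which no
   internal vertex admits.  So leaves, separations and finally edges of G are
   read off the off-diagonal entries of S, which S* and S' share. *)

From mathcomp Require Import all_boot all_order all_algebra.
From mathcomp Require Import ring.
Set Implicit Arguments. Unset Strict Implicit. Unset Printing Implicit Defensive.
Import Order.TTheory GRing.Theory Num.Theory.
Local Open Scope ring_scope.

Section TreeGraph.
Variables (T : finType) (e : rel T).

Definition del_vertex (v : T) : rel T := fun a b => [&& e a b, a != v & b != v].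

Definition del_edge (u v : T) : rel T :=
  fun a b => e a b && ~~ [&& (a == u) || (a == v) & (b == u) || (b == v)].

Definition branch (v x : T) : {set T} := [set y | connect (del_vertex v) x y].

Definition distinct3 (k i j : T) := [&& i != j, i != k & j != k].

Definition cut_vertex (k : T) :=
  [exists p, exists q, distinct3 k p q && (q \notin branch k p)].

Lemma mem_branch v x : x \in branch v x.
Proof. by rewrite inE connect0. Qed.

Lemma branch_avoid v x y : y \in branch v x -> x != v -> y != v.
Proof.
rewrite inE => /connectP[p]; elim: p x => [|z p IH] x /=; first by move=> _ ->.
by case/andP=> /and3P[_ _ zv] pz lst _; apply: IH pz lst zv.
Qed.

Lemma branch_self v : branch v v = [set v].
Proof.
apply/setP => y; rewrite !inE; apply/idP/eqP => [|->]; last exact: connect0.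
by case/connectP => [[|z p] /=]; [move=> _ -> | rewrite /del_vertex eqxx andbF].
Qed.

Lemma branch_subset m k i : k \notin branch m i -> branch m i \subset branch k i.
Proof.
move=> kmi; apply/subsetP => z; rewrite !inE => /connectP[p pth ->].
apply/connectP; exists p => //.
apply: (sub_in_path (P := [in branch m i])) (pth); last first.
  by apply/allP => y yp; rewrite inE; exact: (path_connect pth).
move=> a b; rewrite !inE => am bm /and3P[eab _ _]; rewrite /del_vertex eab /=.
by apply/andP; split; apply: contraNneq kmi => <-; rewrite inE.
Qed.

Lemma branch_nbr x v : connect e x v -> x != v ->
  exists2 m, e m v & m \in branch v x.
Proof.
case/connectP => p; elim: p x => [|y p IH] x /=; first by move=> _ ->; rewrite eqxx.
case/andP=> exy pth lst xv; have [yv|yv] := eqVneq y v.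
  by exists x; [rewrite -yv | exact: mem_branch].
have [m emv] := IH y pth lst yv; rewrite !inE => ym; exists m => //.
by rewrite inE; apply: connect_trans ym; apply: connect1; rewrite /del_vertex exy xv yv.
Qed.

Lemma leaf_nbr_eq a b y : is_leaf e a -> e a b -> e a y -> y = b.
Proof.
move=> /eqP/cards1P[c Ec] eab eay.
have mem_c x : e a x -> x = c by move=> eax; apply/set1P; rewrite -Ec inE.
by rewrite (mem_c y eay) (mem_c b eab).
Qed.

Lemma leaf_branch k b : is_leaf e k -> e k b -> branch b k = [set k].
Proof.
move=> lk ekb; apply/setP => z; rewrite !inE; apply/idP/eqP => [|->]; last exact: connect0.
case/connectP => [[|y p] /=]; first by move=> _ ->.
by case/andP=> /and3P[eky _]; rewrite (leaf_nbr_eq lk ekb eky) eqxx.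
Qed.

Hypotheses (e_sym : symmetric e) (e_irr : irreflexive e) (e_acyclic : is_acyclic e).

Lemma edge_neq a b : e a b -> a != b.
Proof. by apply: contraTneq => ->; rewrite e_irr. Qed.

Lemma del_vertex_sym v : symmetric (del_vertex v).
Proof. by move=> a b; rewrite /del_vertex e_sym [(a != v) && _]andbC. Qed.

Lemma branch_sym v x y : (y \in branch v x) = (x \in branch v y).
Proof. by rewrite !inE (sym_connect_sym (del_vertex_sym v)). Qed.

Lemma del_edge_sym u v : symmetric (del_edge u v).
Proof. by move=> a b; rewrite /del_edge e_sym; congr (_ && ~~ _); apply: andbC. Qed.

Lemma acyclic_del_edge u v : e u v -> ~~ connect (del_edge u v) v u.
Proof.
move=> euv; apply/negP => /connectP [p pth lst].
case/shortenP: pth lst => p' pth' uq _ lst.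
apply: e_acyclic; exists (v :: p').
have pe : path e v p' by apply: sub_path pth' => a b /andP[].
move: pth' uq lst pe; case: p' => [|w [|w' q]] /=.
- by move=> _ _ uv; move: euv; rewrite uv e_irr.
- by move=> /andP[/andP[_ h] _] _ uw _; move: h; rewrite -uw !eqxx !orbT.
- move=> _ -> lst /andP[evw /andP[eww' pq]].
  by rewrite evw eww' /= rcons_path pq /= -lst euv.
Qed.

Lemma nbr_separates v m x y : e v m -> m \in branch v x -> y \in branch v x ->
  y != m -> y \notin branch m v.
Proof.
move=> evm mvx yvx ym; apply/negP; rewrite inE => cvy.
have cym : connect (del_vertex v) y m.
  by move: yvx mvx; rewrite branch_sym !inE; apply: connect_trans.
have : connect (del_edge v m) v m.
  apply: (connect_trans (y := y)).
    apply: connect_sub cvy => a b /and3P[eab am bm]; apply: connect1.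
    rewrite /del_edge eab /= (negbTE am) (negbTE bm) !orbF; apply/negP => /andP[/eqP ea /eqP eb].
    by move: eab; rewrite ea eb e_irr.
  apply: connect_sub cym => a b /and3P[eab av bv]; apply: connect1.
  rewrite /del_edge eab /= (negbTE av) (negbTE bv) /=; apply/negP => /andP[/eqP ea /eqP eb].
  by move: eab; rewrite ea eb e_irr.
by rewrite (sym_connect_sym (del_edge_sym v m)); apply/negP; apply: acyclic_del_edge.
Qed.

Lemma nbrs_separated i x j : e i x -> e i j -> x != j -> j \notin branch i x.
Proof.
move=> eix eij xj; apply/negP => jix.
have := nbr_separates eij jix (mem_branch i x) xj; rewrite inE => /negP; apply.
by apply: connect1; rewrite /del_vertex eix (edge_neq eij) xj.
Qed.

Hypothesis e_connected : is_connected e.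

Lemma branch_descent k i : i != k -> exists m, [/\ e k m, m \in branch k i,
  {in branch k i, forall y, k \notin branch m y}
  & i != m -> (#|branch m i| < #|branch k i|)%N].
Proof.
move=> ik; have [m emk mki] := branch_nbr (e_connected i k) ik.
have ekm : e k m by rewrite e_sym.
have sep : {in branch k i, forall y, k \notin branch m y}.
  move=> y yki; have [->|ym] := eqVneq y m.
    by rewrite branch_self inE (edge_neq ekm).
  by rewrite -branch_sym; apply: nbr_separates yki ym.
exists m; split => // im; apply: proper_card; apply/properP; split.
  exact/branch_subset/sep/mem_branch.
by exists m => //; apply/negP => /branch_avoid/(_ im); rewrite eqxx.
Qed.

Lemma noncut_leaf k z : ~~ cut_vertex k -> z != k -> exists2 b, e k b & is_leaf e k.
Proof.
move=> nck zk; have [m emk _] := branch_nbr (e_connected z k) zk.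
have ekm : e k m by rewrite e_sym.
exists m => //; rewrite /is_leaf (_ : [set y | e k y] = [set m]) ?cards1 //.
apply/setP => y; rewrite !inE; apply/idP/eqP => [eky|->//]; apply/eqP.
apply: contraNT nck => my; apply/existsP; exists m; apply/existsP; exists y.
have yk : y != k by rewrite eq_sym (edge_neq eky).
by rewrite /distinct3 eq_sym my (edge_neq emk) yk nbrs_separated // eq_sym.
Qed.

Lemma tree_edgeE i j :
  e i j = (i != j) && [forall k, distinct3 k i j ==> (j \in branch k i)].
Proof.
apply/idP/andP => [eij | [ij /forallP conn_ij]].
  split; first exact: edge_neq.
  apply/forallP => k; apply/implyP => /and3P[_ ik jk].
  by rewrite inE connect1 // /del_vertex eij ik jk.
apply: contraT => neij; have [m emj mji] := branch_nbr (e_connected i j) ij.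
have mi : m != i by apply: contraNneq neij => <-.
have ejm : e j m by rewrite e_sym.
have := conn_ij m; rewrite /distinct3 ij eq_sym mi (edge_neq ejm) /= branch_sym.
by rewrite (negbTE (nbr_separates ejm mji (mem_branch j i) _)) // eq_sym.
Qed.

End TreeGraph.

Lemma qform_delta (R : pzRingType) n (A : 'M[R]_n) (k l : 'I_n) :
  (delta_mx k 0 : 'cV_n)^T *m A *m delta_mx l 0 = (A k l)%:M.
Proof. by apply/matrixP => i j; rewrite !ord1 trmx_delta -rowE -colE !mxE eqxx. Qed.

Lemma qform_delta2 (R : comPzRingType) n (A : 'M[R]_n) (k l : 'I_n) a b :
  let x := a *: delta_mx k 0 + b *: delta_mx l 0 : 'cV_n in
  (x^T *m A *m x) 0 0 = a ^+ 2 * A k k + a * b * (A k l + A l k) + b ^+ 2 * A l l.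
Proof.
rewrite /= [(_ + _)^T]linearD /= ![(_ *: _)^T]linearZ /=.
rewrite !(mulmxDl, mulmxDr) -!(scalemxAl, scalemxAr) !qform_delta !mxE eqxx !mulr1n.
ring.
Qed.

Lemma invmx_mulE (R : comUnitRingType) n (S : 'M[R]_n) a b : S \in unitmx ->
  \sum_c invmx S a c * S c b = (a == b)%:R.
Proof. by move=> Su; have := congr1 (fun M : 'M_n => M a b) (mulVmx Su); rewrite !mxE. Qed.

Section PosDef.
Variables (R : realFieldType) (n : nat) (S : 'M[R]_n).
Hypothesis S_pd : posdef S.

Lemma posdef_sym i j : S i j = S j i.
Proof. by rewrite -[in LHS]S_pd.1 mxE. Qed.

Lemma posdef_diag_gt0 k : 0 < S k k.
Proof.
have := S_pd.2 (delta_mx k 0); rewrite qform_delta mxE eqxx mulr1n; apply.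
by apply/eqP => /matrixP/(_ k 0); rewrite !mxE !eqxx; apply/eqP; rewrite oner_neq0.
Qed.

Lemma posdef_sqr_lt k l : k != l -> S k l ^+ 2 < S k k * S l l.
Proof.
move=> kl; have Skk := posdef_diag_gt0 k.
set x := S k l *: delta_mx k 0 + (- S k k) *: delta_mx l 0 : 'cV_n.
have x0 : x != 0.
  apply/eqP => /matrixP/(_ l 0); rewrite !mxE !eqxx (eq_sym l k) (negbTE kl) /=.
  by rewrite mulr0 add0r mulr1; apply/eqP; rewrite oppr_eq0 gt_eqF.
have := S_pd.2 _ x0; rewrite qform_delta2 (posdef_sym l k).
have -> : S k l ^+ 2 * S k k + S k l * - S k k * (S k l + S k l) + (- S k k) ^+ 2 * S l l
  = S k k * (S k k * S l l - S k l ^+ 2) by ring.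
by rewrite pmulr_rgt0 // subr_gt0.
Qed.

Lemma posdef_unitmx : S \in unitmx.
Proof.
rewrite unitmxE unitfE; apply/negP => /det0P[v v0 vS].
have := S_pd.2 v^T; rewrite trmx_eq0 => /(_ v0).
by rewrite trmxK vS mul0mx mxE ltxx.
Qed.

Lemma posdef_invmx : posdef (invmx S).
Proof.
split; first by rewrite trmx_inv S_pd.1.
move=> x x0; set y := invmx S *m x.
have xE : x = S *m y by rewrite /y mulmxA mulmxV ?posdef_unitmx // mul1mx.
have y0 : y != 0 by apply: contraNneq x0 => y0; rewrite xE y0 mulmx0.
have -> : x^T *m invmx S *m x = y^T *m S *m y.
  by rewrite {1}xE trmx_mul S_pd.1 -!mulmxA.
exact: S_pd.2 _ y0.
Qed.

Lemma posdef_markov (A : {set 'I_n}) i j k : i \in A -> j \notin A -> k \notin A ->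
  (forall a c, a \in A -> c \notin A -> c != k -> invmx S a c = 0) ->
  S i j * S k k = S i k * S k j.
Proof.
move=> iA jA kA W0; pose u c := S c j * S k k - S c k * S k j.
(* [invmx S *m v] vanishes on [A], so [v] is isotropic for [invmx S]. *)
pose v := \col_c (if c \in A then u c else 0).
have Wu a : a \in A -> \sum_c invmx S a c * u c = 0.
  move=> aA; under eq_bigr => c _ do rewrite /u mulrBr !mulrA.
  rewrite sumrB -!mulr_suml !invmx_mulE ?posdef_unitmx //.
  have [aj ak] : (a == j) = false /\ (a == k) = false.
    by split; [apply: contraNF jA | apply: contraNF kA] => /eqP <-.
  by rewrite aj ak !mul0r subrr.
have Wv a : a \in A -> (invmx S *m v) a ord0 = 0.
  move=> aA; rewrite -(Wu a aA) mxE; apply: eq_bigr => c _; rewrite mxE.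
  case: ifP => // /negbT cA; have [->|ck] := eqVneq c k.
    by rewrite /u [S k k * _]mulrC subrr.
  by rewrite W0 // mulr0 mul0r.
have v0 : v = 0.
  apply/eqP; apply: contraT => /posdef_invmx.2; rewrite -mulmxA mxE big1 ?ltxx //.
  move=> a _; rewrite [v^T _ _]mxE [v a 0]mxE.
  by case: ifP => [/Wv ->|_]; rewrite ?mulr0 ?mul0r.
have := congr1 (fun x : 'cV_n => x i 0) v0; rewrite !mxE iA.
by move/eqP; rewrite subr_eq0 => /eqP.
Qed.

End PosDef.

Section SepRatio.
Variables (R : realFieldType) (n : nat).
Implicit Types (M : 'M[R]_n) (k i j : 'I_n).

Definition sep_ratio M k i j := `|M i k * M k j / M i j|.

Definition max_sep_ratio M k :=
  \big[Num.max/0]_(p | distinct3 k p.1 p.2) sep_ratio M k p.1 p.2.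

Definition leaf_test M k := [exists j, [&& j != k,
  max_sep_ratio M k * max_sep_ratio M j == M k j ^+ 2
  & max_sep_ratio M k < max_sep_ratio M j]].

Definition offdiag_sep M k i j :=
  ~~ leaf_test M k && (sep_ratio M k i j == max_sep_ratio M k).

Variables M1 M2 : 'M[R]_n.
Hypothesis M12 : forall a b, a != b -> M1 a b = M2 a b.

Lemma eq_sep_ratio k i j : distinct3 k i j -> sep_ratio M1 k i j = sep_ratio M2 k i j.
Proof. by case/and3P=> ij ik jk; rewrite /sep_ratio !M12 // eq_sym. Qed.

Lemma eq_max_sep_ratio k : max_sep_ratio M1 k = max_sep_ratio M2 k.
Proof. by apply: eq_bigr => p; apply: eq_sep_ratio. Qed.

Lemma eq_leaf_test k : leaf_test M1 k = leaf_test M2 k.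
Proof.
apply: eq_existsb => j; rewrite !eq_max_sep_ratio.
by have [//|jk] := eqVneq j k; rewrite M12 // eq_sym.
Qed.

Lemma eq_offdiag_sep k i j :
  distinct3 k i j -> offdiag_sep M1 k i j = offdiag_sep M2 k i j.
Proof.
by move=> kij; rewrite /offdiag_sep eq_leaf_test eq_sep_ratio // eq_max_sep_ratio.
Qed.

End SepRatio.

Lemma ci_graph_irr (R : realFieldType) n (S : 'M[R]_n) : irreflexive (ci_graph S).
Proof. by move=> a; rewrite /ci_graph eqxx. Qed.

Lemma ci_graph_sym (R : realFieldType) n (S : 'M[R]_n) :
  posdef S -> symmetric (ci_graph S).
Proof.
by move=> S_pd a b; rewrite /ci_graph eq_sym (posdef_sym (posdef_invmx S_pd)).
Qed.

Section TreeCovariance.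
Variables (R : realFieldType) (n : nat) (S : 'M[R]_n).
Hypotheses (S_pd : posdef S) (S_tree : is_tree (ci_graph S)).
Local Notation G := (ci_graph S).

Let G_sym := ci_graph_sym S_pd.
Let G_irr := @ci_graph_irr R n S.
Let G_branch_sym := branch_sym G_sym.
Let G_descent := branch_descent G_sym G_irr S_tree.2 S_tree.1.
Let G_noncut_leaf := noncut_leaf G_sym G_irr S_tree.2 S_tree.1.
Let S_sym := posdef_sym S_pd.
Let S_diag_gt0 := posdef_diag_gt0 S_pd.

Lemma sep_mulE i j k : j \notin branch G k i -> S i j * S k k = S i k * S k j.
Proof.
have [<- _|ik jki] := eqVneq i k; first exact: mulrC.
apply: (posdef_markov S_pd (A := branch G k i)) => //; first exact: mem_branch.
  by apply/negP => /branch_avoid/(_ ik); rewrite eqxx.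
move=> a c aki cki ck; apply/eqP; apply: contraNT (cki) => Wac.
have ac : a != c by apply: contraNneq cki => <-.
move: (aki); rewrite !inE => /connect_trans; apply; apply: connect1.
by rewrite /del_vertex /ci_graph ac Wac ck (branch_avoid aki ik).
Qed.

Lemma adj_neq0 i j : G i j -> S i j != 0.
Proof.
move=> Gij; apply/negP => /eqP Sij0.
have Wrow x : x != j -> invmx S i x * S x j = 0.
  move=> xj; have [->|xi] := eqVneq x i; first by rewrite Sij0 mulr0.
  have [->|Wix] := eqVneq (invmx S i x) 0; first by rewrite mul0r.
  have Gix : G i x by rewrite /ci_graph eq_sym xi Wix.
  have := sep_mulE (nbrs_separated G_sym G_irr S_tree.2 Gix Gij xj).
  rewrite (S_sym x i) Sij0 mulr0 => /eqP.
  by rewrite mulf_eq0 (gt_eqF (S_diag_gt0 i)) orbF => /eqP ->; rewrite mulr0.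
have := invmx_mulE i j (posdef_unitmx S_pd).
rewrite (negbTE (edge_neq G_irr Gij)) (bigD1 j) //= big1 => [|x /Wrow //].
move/eqP; rewrite addr0 mulf_eq0 (gt_eqF (S_diag_gt0 j)) orbF.
by case/andP: Gij => _ /negbTE ->.
Qed.

Lemma entry_neq0 i j : i != j -> S i j != 0.
Proof.
move: {2}#|branch G j i|.+1 (ltnSn #|branch G j i|) => N.
elim: N i j => // N IH i j ltN ij.
have [m [Gjm _ sep lt_m]] := G_descent ij.
have [->|im] := eqVneq i m; first by rewrite S_sym adj_neq0.
have Sim : S i m != 0 by apply: IH; [exact: leq_trans (lt_m im) _ | ].
have := sep_mulE (i := j) (j := i) (k := m); rewrite -G_branch_sym.
move=> /(_ (sep _ (mem_branch _ _ _))) /eqP; apply: contraTneq => Sji0.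
by rewrite (S_sym j i) Sji0 mul0r eq_sym mulf_neq0 ?(adj_neq0 Gjm) // S_sym.
Qed.

Lemma sep_ratio_sym k i j : sep_ratio S k i j = sep_ratio S k j i.
Proof. by rewrite /sep_ratio (S_sym i k) (S_sym k j) (S_sym i j) [S k i * _]mulrC. Qed.

Lemma sep_ratio_sep k i j : i != j -> j \notin branch G k i -> sep_ratio S k i j = S k k.
Proof.
move=> ij jki; rewrite /sep_ratio -(sep_mulE jki) mulrAC divff ?entry_neq0 // mul1r.
exact/ger0_norm/ltW.
Qed.

Lemma sep_ratio_self k j : j != k -> sep_ratio S k k j = S k k.
Proof. by move=> jk; rewrite sep_ratio_sep ?branch_self ?inE // eq_sym. Qed.

Lemma sep_ratio_nbr k m i j : k \notin branch G m i -> k \notin branch G m j ->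
  sep_ratio S k i j * S m m ^+ 2 = S k m ^+ 2 * sep_ratio S m i j.
Proof.
move=> /sep_mulE ei /sep_mulE ej; rewrite /sep_ratio.
rewrite -[S m m ^+ 2]ger0_norm ?sqr_ge0 // -[S k m ^+ 2]ger0_norm ?sqr_ge0 // -!normrM.
congr `|_|; transitivity ((S i k * S m m) * (S j k * S m m) / S i j).
  by rewrite (S_sym k j); ring.
by rewrite ei ej (S_sym m k) (S_sym j m); ring.
Qed.

Lemma sep_ratio_lt_nbr k m i j : k != m ->
  k \notin branch G m i -> k \notin branch G m j ->
  sep_ratio S m i j <= S m m -> sep_ratio S k i j < S k k.
Proof.
move=> km ki kj le_m; have Smm := S_diag_gt0 m.
rewrite -(ltr_pM2r (exprn_gt0 2 Smm)) sep_ratio_nbr //.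
apply: (@le_lt_trans _ _ (S k m ^+ 2 * S m m)); first by rewrite ler_wpM2l ?sqr_ge0.
by rewrite expr2 mulrA ltr_pM2r // -expr2 posdef_sqr_lt.
Qed.

Lemma sep_ratio_le k i j : i != j -> sep_ratio S k i j <= S k k.
Proof.
move: {2}#|branch G k i|.+1 (ltnSn #|branch G k i|) => N.
elim: N k i j => // N IH k i j ltN ij.
have [<-|ik] := eqVneq i k; first by rewrite sep_ratio_self ?lexx // eq_sym.
have [<-|jk] := eqVneq j k; first by rewrite sep_ratio_sym sep_ratio_self ?lexx.
have [jki|/(sep_ratio_sep ij)->] := boolP (j \in branch G k i); last exact: lexx.
have [m [Gkm _ sep lt_m]] := G_descent ik.
apply/ltW/(sep_ratio_lt_nbr (edge_neq G_irr Gkm) (sep _ (mem_branch _ _ _)) (sep _ jki)).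
have [<-|im] := eqVneq i m; first by rewrite sep_ratio_self ?lexx // eq_sym.
exact: IH (leq_trans (lt_m im) ltN) ij.
Qed.

Lemma sep_ratio_lt k i j : distinct3 k i j -> j \in branch G k i -> sep_ratio S k i j < S k k.
Proof.
case/and3P=> ij ik _ jki; have [m [Gkm _ sep _]] := G_descent ik.
apply: (sep_ratio_lt_nbr (edge_neq G_irr Gkm) (sep _ (mem_branch _ _ _)) (sep _ jki)).
exact: sep_ratio_le.
Qed.

Lemma max_sep_ratio_cut k : cut_vertex G k -> max_sep_ratio S k = S k k.
Proof.
case/existsP=> p /existsP[q /andP[kpq qkp]]; apply/le_anti/andP; split.
  apply: bigmax_le => [|[i j] /and3P[ij _ _]]; [exact/ltW | exact: sep_ratio_le].
by apply: (bigmax_sup (p, q)) => //=; case/and3P: kpq => pq _ _; rewrite sep_ratio_sep.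
Qed.

Hypothesis S_leaf : leaf_condition S.

Section Leaf.
Variables k b : 'I_n.
Hypotheses (k_leaf : is_leaf G k) (Gkb : G k b).

Lemma leaf_sep p : p != k -> k \notin branch G b p.
Proof. by move=> pk; rewrite -G_branch_sym (leaf_branch k_leaf Gkb) inE. Qed.

Lemma leaf_nbr_lt : `|S k b| < S b b.
Proof.
have Wkk := posdef_diag_gt0 (posdef_invmx S_pd) k.
have kb := edge_neq G_irr Gkb.
have row : invmx S k k * S k b + invmx S k b * S b b = 0.
  have := invmx_mulE k b (posdef_unitmx S_pd).
  rewrite (negbTE kb) (bigD1 k) //= (bigD1 b) 1?eq_sym //= big1 ?addr0 // => c /andP[ck cb].
  have : ~~ G k c by apply: contra cb => /(leaf_nbr_eq k_leaf Gkb) ->.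
  by rewrite /ci_graph eq_sym ck negbK => /eqP ->; rewrite mul0r.
have : `|S k b| * invmx S k k = `|invmx S k b| * S b b.
  rewrite -[invmx S k k]ger0_norm ?ltW // -[S b b]ger0_norm ?ltW // -!normrM mulrC.
  by move/eqP: row; rewrite addr_eq0 => /eqP ->; rewrite normrN.
by rewrite -(ltr_pM2r Wkk) => ->; rewrite mulrC ltr_pM2l // S_leaf.
Qed.

Lemma sep_ratio_leaf p q : p != k -> q != k ->
  sep_ratio S k p q = S k b ^+ 2 / S b b ^+ 2 * sep_ratio S b p q.
Proof.
move=> pk qk; have Sbb2 : S b b ^+ 2 != 0 by rewrite expf_neq0 ?gt_eqF.
rewrite -[LHS](mulfK Sbb2) sep_ratio_nbr ?leaf_sep //; exact: mulrAC.
Qed.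

Lemma max_sep_ratio_leaf_le : max_sep_ratio S k <= S k b ^+ 2 / S b b.
Proof.
have Sbb := S_diag_gt0 b.
apply: bigmax_le => [|[p q] /and3P[pq pk qk]]; first by rewrite divr_ge0 ?sqr_ge0 ?ltW.
rewrite /= sep_ratio_leaf // (_ : S k b ^+ 2 / S b b = S k b ^+ 2 / S b b ^+ 2 * S b b).
  by rewrite ler_wpM2l ?divr_ge0 ?sqr_ge0 // sep_ratio_le.
by field; rewrite gt_eqF.
Qed.

Lemma max_sep_ratio_leaf z : z != k -> z != b -> max_sep_ratio S k = S k b ^+ 2 / S b b.
Proof.
move=> zk zb; have bk : b != k by rewrite eq_sym (edge_neq G_irr Gkb).
apply/le_anti; rewrite max_sep_ratio_leaf_le /=.
apply: (bigmax_sup (b, z)); first by rewrite /distinct3 /= eq_sym zb bk zk.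
rewrite /= sep_ratio_leaf // sep_ratio_self // le_eqVlt; apply/orP; left.
by apply/eqP; field; rewrite gt_eqF.
Qed.

Lemma leaf_sqr_div_lt : S k b ^+ 2 / S b b < S b b.
Proof.
have Sbb := S_diag_gt0 b.
rewrite ltr_pdivrMr // -real_normK ?num_real // expr2.
by apply: ltr_pM; rewrite ?normr_ge0 ?leaf_nbr_lt.
Qed.

End Leaf.

Lemma mul_max_sep_ratio_leaf_neq k j c : is_leaf G j -> G j c -> k != j -> k != c ->
  S k k * max_sep_ratio S j != S k j ^+ 2.
Proof.
move=> lj Gjc kj kc; rewrite (max_sep_ratio_leaf lj Gjc kj kc); apply/eqP => prod.
have sep := sep_mulE (leaf_sep lj Gjc kj).
have Scc := S_diag_gt0 c.
have Sjc2 : S j c ^+ 2 != 0 by rewrite expf_neq0 // entry_neq0 // (edge_neq G_irr Gjc).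
have /(mulfI Sjc2) : S j c ^+ 2 * (S k k * S c c) = S j c ^+ 2 * S k c ^+ 2.
  transitivity (S k k * (S j c ^+ 2 / S c c) * S c c ^+ 2); first by field; rewrite gt_eqF.
  by rewrite prod -exprMn sep (S_sym c j); ring.
by move/eqP; rewrite eq_sym lt_eqF // posdef_sqr_lt.
Qed.

Lemma leaf_test_noncut k i j : distinct3 k i j -> ~~ cut_vertex G k -> leaf_test S k.
Proof.
case/and3P=> ij ik jk nck; have [b Gkb lk] := G_noncut_leaf nck ik.
have [z zk zb] : exists2 z, z != k & z != b.
  by have [ib|ib] := eqVneq i b; [exists j => //; rewrite -ib eq_sym | exists i].
have bk : b != k by rewrite eq_sym (edge_neq G_irr Gkb).
have cut_b : cut_vertex G b.
  apply/existsP; exists k; apply/existsP; exists z.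
  by rewrite /distinct3 eq_sym zk eq_sym bk zb (leaf_branch lk Gkb) inE.
apply/existsP; exists b; rewrite bk (max_sep_ratio_leaf lk Gkb zk zb) max_sep_ratio_cut //.
by rewrite divfK ?(gt_eqF (S_diag_gt0 b)) // eqxx leaf_sqr_div_lt.
Qed.

Lemma leaf_test_cut k : cut_vertex G k -> ~~ leaf_test S k.
Proof.
move=> ck; apply/existsP => -[j /and3P[jk /eqP prod lt]].
rewrite max_sep_ratio_cut // in prod lt; have kj : k != j by rewrite eq_sym.
have [cj|ncj] := boolP (cut_vertex G j).
  rewrite max_sep_ratio_cut // in prod.
  by have := posdef_sqr_lt S_pd kj; rewrite -prod ltxx.
have [c Gjc lj] := G_noncut_leaf ncj kj.
have [ck'|ck'] := eqVneq c k; last first.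
  by move/eqP: prod; apply/negP; rewrite (mul_max_sep_ratio_leaf_neq lj Gjc) // eq_sym.
move: lt; rewrite ltNge -ck' (le_trans (max_sep_ratio_leaf_le lj Gjc)) //.
exact/ltW/leaf_sqr_div_lt.
Qed.

Lemma offdiag_sepE k i j : distinct3 k i j -> offdiag_sep S k i j = (j \notin branch G k i).
Proof.
move=> kij; have /and3P[ij _ _] := kij.
have [ck|nck] := boolP (cut_vertex G k); last first.
  rewrite /offdiag_sep (leaf_test_noncut kij nck) /=; apply/esym/negbTE; rewrite negbK.
  by apply: contraNT nck => jki; apply/existsP; exists i; apply/existsP; exists j; rewrite kij.
rewrite /offdiag_sep (negbTE (leaf_test_cut ck)) max_sep_ratio_cut //=.
have [jki|jki] := boolP (j \in branch G k i); last by rewrite sep_ratio_sep // eqxx.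
by rewrite lt_eqF // sep_ratio_lt.
Qed.

Lemma ci_graph_offdiagE i j :
  G i j = (i != j) && [forall k, distinct3 k i j ==> ~~ offdiag_sep S k i j].
Proof.
rewrite (tree_edgeE G_sym G_irr S_tree.2 S_tree.1); congr (_ && _).
by apply: eq_forallb => k; case kij: (distinct3 k i j); rewrite //= offdiag_sepE ?negbK.
Qed.

End TreeCovariance.

Unset Implicit Arguments.

Theorem theorem4 (R : realFieldType) (n : nat)
  (Sstar Dstar Sprime Dprime : 'M[R]_n) :
  posdef Sstar -> is_tree (ci_graph Sstar) -> leaf_condition Sstar ->
  nonneg_diag Dstar ->
  posdef Sprime -> is_tree (ci_graph Sprime) -> leaf_condition Sprime ->
  nonneg_diag Dprime ->
  Sstar + Dstar = Sprime + Dprime ->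
  ci_graph Sprime =2 ci_graph Sstar.
Proof.
move=> S1_pd S1_tree S1_leaf D1 S2_pd S2_tree S2_leaf D2 E.
have offdiagE a b : a != b -> Sprime a b = Sstar a b.
  move=> ab; have := congr1 (fun M : 'M[R]_n => M a b) E; rewrite !mxE.
  by rewrite (is_diag_mxP D1.1 a b ab) (is_diag_mxP D2.1 a b ab) !addr0 => ->.
move=> i j; rewrite (ci_graph_offdiagE S2_pd S2_tree S2_leaf).
rewrite (ci_graph_offdiagE S1_pd S1_tree S1_leaf); congr (_ && _).
by apply: eq_forallb => k; case kij: (distinct3 k i j); rewrite //= (eq_offdiag_sep offdiagE).
Qed.
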